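(* Let $G$ be an open localic groupoid and let $X_1,X_2$ be principal $G$-bundles over locales $M_1$ and $M_2$ respectively. Then every equivariant map $f:X_1\to X_2$ induces a map of locales $f/G:M_1\to M_2$ (compatible with the bundle maps). Furthermore, $f$ is an isomorphism if and only if $f/G$ is an isomorphism, and $f$ is open if and only if $f/G$ is open.
   Context: An open localic groupoid $G$ has locales $G_0,G_1$ with structure maps, domain map $d$ open. A left $G$-locale is a locale $X$ with anchor $p:X\to G_0$ and associative unital action $a:G_1\times_{G_0}X\to X$; an equivariant map commutes with anchors and actions. A principal $G$-bundle over a locale $M$ is a $G$-locale with $\pi:X\to M$ such that $\pi\circ a=\pi\circ\pi_2$, $\langle a,\pi_2\rangle:G_1\times_{G_0}X\to X\times_MX$ is an isomorphism, and $\pi$ is an open surjection; then $M$ is isomorphic to the orbit locale $X/G$, the coequalizer of $a$ and $\pi_2$. *)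

Set Implicit Arguments.
Unset Strict Implicit.

Record frame := Frame {
  carrier :> Type;
  fle : carrier -> carrier -> Prop;
  fmeet : carrier -> carrier -> carrier;
  fjoin : (carrier -> Prop) -> carrier;
  fle_refl : forall a, fle a a;
  fle_trans : forall a b c, fle a b -> fle b c -> fle a c;
  fle_antisym : forall a b, fle a b -> fle b a -> a = b;
  fmeet_glb : forall a b c, fle c (fmeet a b) <-> (fle c a /\ fle c b);
  fjoin_lub : forall (S : carrier -> Prop) c,
      fle (fjoin S) c <-> (forall a, S a -> fle a c);
  fdistrib : forall a (S : carrier -> Prop),
      fmeet a (fjoin S) = fjoin (fun c => exists s, S s /\ c = fmeet a s)
}.

Definition ftop (F : frame) : F := fjoin (fun _ : F => True).

(* ---------- Locale maps X -> Y = frame homomorphisms O(Y) -> O(X) ---------- *)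
Record lmap (X Y : frame) := LMap {
  finv : Y -> X;
  finv_top : finv (ftop Y) = ftop X;
  finv_meet : forall a b, finv (fmeet a b) = fmeet (finv a) (finv b);
  finv_join : forall (S : Y -> Prop),
      finv (fjoin S) = fjoin (fun x => exists s, S s /\ x = finv s)
}.





Lemma lcomp_top (X Y Z : frame) (f : lmap X Y) (g : lmap Y Z) :
  finv f (finv g (ftop Z)) = ftop X.
Proof. rewrite finv_top, finv_top. reflexivity. Qed.

Lemma lcomp_meet (X Y Z : frame) (f : lmap X Y) (g : lmap Y Z) a b :
  finv f (finv g (fmeet a b)) = fmeet (finv f (finv g a)) (finv f (finv g b)).
Proof. rewrite finv_meet, finv_meet. reflexivity. Qed.


Lemma join_ub (X : frame) (S : X -> Prop) a : S a -> fle a (fjoin S).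
Proof. intros Sa. exact (proj1 (fjoin_lub S (fjoin S)) (fle_refl _) a Sa). Qed.

(* Composition g o f : X -> Z of f : X -> Y and g : Y -> Z.  Join
   preservation is proved via extensionality of the indexing predicate,
   which we avoid by an order argument. *)
Lemma join_ext (X : frame) (S T : X -> Prop) :
  (forall x, S x -> exists y, T y /\ fle x y) ->
  (forall y, T y -> exists x, S x /\ fle y x) -> fjoin S = fjoin T.
Proof.
  intros H1 H2. apply fle_antisym; apply fjoin_lub.
  - intros x Sx. destruct (H1 x Sx) as [y [Ty le]].
    eapply fle_trans; [exact le|].
    apply join_ub; exact Ty.
  - intros y Ty. destruct (H2 y Ty) as [x [Sx le]].
    eapply fle_trans; [exact le|].
    apply join_ub; exact Sx.
Qed.

Lemma lid_join (X : frame) (S : X -> Prop) :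
  fjoin S = fjoin (fun x => exists s, S s /\ x = s).
Proof.
  apply join_ext.
  - intros x Sx. exists x. split; [exists x; auto | apply fle_refl].
  - intros y [s [Ss ->]]. exists s. split; [exact Ss | apply fle_refl].
Qed.

Definition lid (X : frame) : lmap X X :=
  @LMap X X (fun a => a) eq_refl (fun _ _ => eq_refl) (@lid_join X).

Lemma lcomp_join (X Y Z : frame) (f : lmap X Y) (g : lmap Y Z) (S : Z -> Prop) :
  finv f (finv g (fjoin S)) =
  fjoin (fun x => exists s, S s /\ x = finv f (finv g s)).
Proof.
  rewrite finv_join, finv_join. apply join_ext.
  - intros x [y [[s [Ss ->]] ->]]. exists (finv f (finv g s)).
    split; [exists s; auto | apply fle_refl].
  - intros x [s [Ss ->]]. exists (finv f (finv g s)).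
    split; [|apply fle_refl]. exists (finv g s); split; auto. exists s; auto.
Qed.

Definition lcomp (X Y Z : frame) (g : lmap Y Z) (f : lmap X Y) : lmap X Z :=
  @LMap X Z (fun c => finv f (finv g c)) (lcomp_top f g) (lcomp_meet f g)
        (lcomp_join f g).

Declare Scope locale_scope.
Notation "g \o f" := (lcomp g f) (at level 50, left associativity) : locale_scope.
Delimit Scope locale_scope with L.
Open Scope locale_scope.

Definition lmeq (X Y : frame) (f g : lmap X Y) : Prop :=
  forall y, finv f y = finv g y.
Notation "f =l g" := (lmeq f g) (at level 70) : locale_scope.

Definition is_iso (X Y : frame) (f : lmap X Y) : Prop :=
  exists g : lmap Y X, (g \o f =l lid X) /\ (f \o g =l lid Y).

Definition is_open (X Y : frame) (f : lmap X Y) : Prop :=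
  exists ex : X -> Y,
    (forall x y, fle (ex x) y <-> fle x (finv f y)) /\
    (forall x y, ex (fmeet x (finv f y)) = fmeet (ex x) y).

Definition is_surj (X Y : frame) (f : lmap X Y) : Prop :=
  forall a b, finv f a = finv f b -> a = b.

Definition is_open_surj (X Y : frame) (f : lmap X Y) : Prop :=
  is_open f /\ is_surj f.

Definition is_pullback (A B C P : frame) (f : lmap A C) (g : lmap B C)
    (p1 : lmap P A) (p2 : lmap P B) : Prop :=
  (f \o p1 =l g \o p2) /\
  (forall (W : frame) (a : lmap W A) (b : lmap W B),
      f \o a =l g \o b -> exists h : lmap W P, p1 \o h =l a /\ p2 \o h =l b) /\
  (forall (W : frame) (h h' : lmap W P),
      p1 \o h =l p1 \o h' -> p2 \o h =l p2 \o h' -> h =l h').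

(* Composable pairs (g,h) with d g = r h; their product is m(g,h) = g.h with
   d (g.h) = d h and r (g.h) = r g.  Axioms are stated with generalized
   elements W -> _ (pairings characterized by their projections). *)
Record groupoid := Groupoid {
  G0 : frame; G1 : frame;
  gd : lmap G1 G0; gr : lmap G1 G0;
  gu : lmap G0 G1; gi : lmap G1 G1;
  G2 : frame; gp1 : lmap G2 G1; gp2 : lmap G2 G1;
  G2_pb : is_pullback gd gr gp1 gp2;
  gm : lmap G2 G1;
  gd_u : gd \o gu =l lid G0;
  gr_u : gr \o gu =l lid G0;
  gd_m : gd \o gm =l gd \o gp2;
  gr_m : gr \o gm =l gr \o gp1;
  gd_i : gd \o gi =l gr;
  gr_i : gr \o gi =l gd;
  gunit_l : forall W (g : lmap W G1) (q : lmap W G2),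
      gp1 \o q =l gu \o gr \o g -> gp2 \o q =l g -> gm \o q =l g;
  gunit_r : forall W (g : lmap W G1) (q : lmap W G2),
      gp1 \o q =l g -> gp2 \o q =l gu \o gd \o g -> gm \o q =l g;
  ginv_l : forall W (g : lmap W G1) (q : lmap W G2),
      gp1 \o q =l gi \o g -> gp2 \o q =l g -> gm \o q =l gu \o gd \o g;
  ginv_r : forall W (g : lmap W G1) (q : lmap W G2),
      gp1 \o q =l g -> gp2 \o q =l gi \o g -> gm \o q =l gu \o gr \o g;
  gassoc : forall W (a b c : lmap W G1) (s q s' t : lmap W G2),
      gp1 \o s =l a -> gp2 \o s =l b ->
      gp1 \o q =l gm \o s -> gp2 \o q =l c ->
      gp1 \o s' =l b -> gp2 \o s' =l c ->
      gp1 \o t =l a -> gp2 \o t =l gm \o s' ->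
      gm \o q =l gm \o t
}.

Definition open_groupoid (G : groupoid) : Prop := is_open (gd G).

(* P = G1 x_{G0} X, pairs (g,x) with d g = p x; action a(g,x) = g.x. *)
Record glocale (G : groupoid) := GLocale {
  gX : frame;
  ganch : lmap gX (G0 G);
  gP : frame;
  gq1 : lmap gP (G1 G); gq2 : lmap gP gX;
  gP_pb : is_pullback (gd G) ganch gq1 gq2;
  gact : lmap gP gX;
  ganch_act : ganch \o gact =l gr G \o gq1;
  gact_unit : forall W (x : lmap W gX) (s : lmap W gP),
      gq1 \o s =l gu G \o ganch \o x -> gq2 \o s =l x -> gact \o s =l x;
  gact_assoc : forall W (g h : lmap W (G1 G)) (x : lmap W gX)
      (s : lmap W (G2 G)) (t s' t' : lmap W gP),
      gp1 G \o s =l g -> gp2 G \o s =l h ->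
      gq1 \o t =l gm G \o s -> gq2 \o t =l x ->
      gq1 \o s' =l h -> gq2 \o s' =l x ->
      gq1 \o t' =l g -> gq2 \o t' =l gact \o s' ->
      gact \o t =l gact \o t'
}.

Definition equivariant (G : groupoid) (X Y : glocale G)
    (f : lmap (gX X) (gX Y)) : Prop :=
  (ganch Y \o f =l ganch X) /\
  (forall W (s : lmap W (gP X)) (s' : lmap W (gP Y)),
      gq1 Y \o s' =l gq1 X \o s -> gq2 Y \o s' =l f \o gq2 X \o s ->
      f \o gact X \o s =l gact Y \o s').

Definition principal (G : groupoid) (X : glocale G) (M : frame)
    (pi : lmap (gX X) M) : Prop :=
  (pi \o gact X =l pi \o gq2 X) /\
  (forall (K : frame) (k1 k2 : lmap K (gX X)),
      is_pullback pi pi k1 k2 ->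
      exists h : lmap (gP X) K,
        k1 \o h =l gact X /\ k2 \o h =l gq2 X /\ is_iso h) /\
  is_open_surj pi.

(* A morphism f : X1 -> X2 of principal bundles over fG is locally a product.  On
   T = X2 x_{M2} X1, principality of X2 gives for (y, x) the unique arrow g with y = g . f x,
   and s (y, x) := g . x satisfies f o s = pr_Y and s (f x, x) = x.  So f is a retract of pr_Y,
   which is open when fG is (pullbacks of open maps are open), and f_! = (pr_Y)_! o s^*.  When
   fG is an isomorphism, moreover s (f x', x) = x' whenever pi1 x' = pi1 x, and Beck-Chevalley
   then yields f^* f_! <= 1, so f_! inverts f^*.  Conversely, fG exists and inherits openness
   and invertibility from f because the open surjection pi1 is the coequalizer of its kernel
   pair. *)

From Stdlib Require Import FunctionalExtensionality PropExtensionality ProofIrrelevance.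
Set Implicit Arguments.
Unset Strict Implicit.

Section FrameOrder.
Variable F : frame.
Implicit Types a b c : F.

Lemma fmeet_l a b : fle (fmeet a b) a.
Proof. exact (proj1 (proj1 (fmeet_glb a b _) (fle_refl _))). Qed.

Lemma fmeet_r a b : fle (fmeet a b) b.
Proof. exact (proj2 (proj1 (fmeet_glb a b _) (fle_refl _))). Qed.

Lemma fmeet_intro a b c : fle c a -> fle c b -> fle c (fmeet a b).
Proof. intros; apply fmeet_glb; auto. Qed.

Lemma fjoin_le (S : F -> Prop) c : (forall a, S a -> fle a c) -> fle (fjoin S) c.
Proof. apply fjoin_lub. Qed.

Lemma fle_top a : fle a (ftop F).
Proof. apply join_ub; exact I. Qed.

End FrameOrder.

Ltac solve_meet := first
  [ apply fle_refl
  | apply fmeet_intro; solve_meet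
  | eapply fle_trans; [apply fmeet_l | solve_meet]
  | eapply fle_trans; [apply fmeet_r | solve_meet] ].

Section FrameMeet.
Variable F : frame.
Implicit Types a b c : F.

Lemma fmeetC a b : fmeet a b = fmeet b a.
Proof. apply fle_antisym; solve_meet. Qed.

Lemma fmeetA a b c : fmeet a (fmeet b c) = fmeet (fmeet a b) c.
Proof. apply fle_antisym; solve_meet. Qed.

Lemma fmeet_idPl a b : fle a b -> fmeet a b = a.
Proof. intros; apply fle_antisym; [solve_meet | apply fmeet_intro; auto; apply fle_refl]. Qed.

Lemma fmeet_idPr a b : fle b a -> fmeet a b = b.
Proof. intros; rewrite fmeetC; apply fmeet_idPl; auto. Qed.

Lemma fmeet_mono a b a' b' : fle a a' -> fle b b' -> fle (fmeet a b) (fmeet a' b').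
Proof. intros; apply fmeet_intro; eapply fle_trans; eauto; solve_meet. Qed.

Lemma fmeet_topl a : fmeet (ftop F) a = a.
Proof. apply fmeet_idPr, fle_top. Qed.

Lemma fmeet_topr a : fmeet a (ftop F) = a.
Proof. apply fmeet_idPl, fle_top. Qed.

Lemma fdistrib_r (S : F -> Prop) a :
  fmeet (fjoin S) a = fjoin (fun c => exists s, S s /\ c = fmeet s a).
Proof.
  rewrite fmeetC, fdistrib. apply join_ext.
  - intros x [s [Ss ->]]. exists (fmeet s a). split; eauto. rewrite fmeetC; apply fle_refl.
  - intros x [s [Ss ->]]. exists (fmeet a s). split; eauto. rewrite fmeetC; apply fle_refl.
Qed.

Lemma fmeet_join_self a (S : F -> Prop) :
  fle a (fjoin S) -> a = fjoin (fun c => exists s, S s /\ c = fmeet a s).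
Proof. intros H. rewrite <- fdistrib. symmetry; apply fmeet_idPl, H. Qed.

End FrameMeet.

Ltac lunfold := unfold lmeq in *; cbn [finv lcomp lid] in *.

Lemma finv_mono (X Y : frame) (f : lmap X Y) a b : fle a b -> fle (finv f a) (finv f b).
Proof. intros H. rewrite <- (fmeet_idPl H), finv_meet. apply fmeet_r. Qed.

Lemma surj_fle (X Y : frame) (f : lmap X Y) a b :
  is_surj f -> fle (finv f a) (finv f b) -> fle a b.
Proof.
  intros Hs H. rewrite <- (Hs (fmeet a b) a); [apply fmeet_r|].
  rewrite finv_meet. apply fmeet_idPl, H.
Qed.

Lemma surj_cancel (X Y Z : frame) (p : lmap X Y) (g h : lmap Y Z) :
  is_surj p -> g \o p =l h \o p -> g =l h.
Proof. intros Hs H z. apply Hs, H. Qed.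

Section OpenAdjoint.
Variables (X Y : frame) (f : lmap X Y).

Definition open_adj (ex : X -> Y) : Prop :=
  (forall x y, fle (ex x) y <-> fle x (finv f y)) /\
  (forall x y, ex (fmeet x (finv f y)) = fmeet (ex x) y).

Variables (ex : X -> Y) (Hex : open_adj ex).

Lemma open_adj_unit x : fle x (finv f (ex x)).
Proof. apply (proj1 Hex), fle_refl. Qed.

Lemma open_adj_counit y : fle (ex (finv f y)) y.
Proof. apply (proj1 Hex), fle_refl. Qed.

Lemma open_adj_mono x x' : fle x x' -> fle (ex x) (ex x').
Proof. intros; apply (proj1 Hex). eapply fle_trans; [eauto | apply open_adj_unit]. Qed.

Lemma open_adj_frob x y : ex (fmeet x (finv f y)) = fmeet (ex x) y.
Proof. apply (proj2 Hex). Qed.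

Lemma open_adj_frobl x y : ex (fmeet (finv f y) x) = fmeet y (ex x).
Proof. rewrite fmeetC, open_adj_frob, fmeetC; reflexivity. Qed.

Lemma open_adj_join (S : X -> Prop) :
  fle (ex (fjoin S)) (fjoin (fun c => exists s, S s /\ c = ex s)).
Proof.
  apply (proj1 Hex), fjoin_le. intros a Sa.
  eapply fle_trans; [apply open_adj_unit |]. apply finv_mono, join_ub; eauto.
Qed.

Lemma open_adj_top : is_surj f -> ex (ftop X) = ftop Y.
Proof.
  intros Hs. apply Hs, fle_antisym; rewrite finv_top; [apply fle_top | apply open_adj_unit].
Qed.

Lemma open_adj_finvK : ex (ftop X) = ftop Y -> forall y, ex (finv f y) = y.
Proof.
  intros Htop y. rewrite <- (fmeet_topl (finv f y)), open_adj_frob, Htop. apply fmeet_topl.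
Qed.

End OpenAdjoint.

Lemma open_adj_comp (X Y Z : frame) (f : lmap X Y) (g : lmap Y Z) exf exg :
  open_adj f exf -> open_adj g exg -> open_adj (g \o f) (fun x => exg (exf x)).
Proof.
  intros Hf Hg; split; intros x z; cbn [finv lcomp].
  - rewrite (proj1 Hg), (proj1 Hf). tauto.
  - rewrite (open_adj_frob Hf), (open_adj_frob Hg). reflexivity.
Qed.

Lemma open_adj_iso (X Y : frame) (f : lmap X Y) (e : lmap Y X) :
  e \o f =l lid X -> f \o e =l lid Y -> open_adj f (finv e).
Proof.
  intros H1 H2. lunfold. split; intros x y.
  - split; intros H; [rewrite <- (H1 x) | rewrite <- (H2 y)]; apply finv_mono; auto.
  - rewrite finv_meet, H2. reflexivity.
Qed.

Lemma open_adj_split (X Y T : frame) (f : lmap X Y) (p : lmap T Y) (s : lmap T X)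
  (j : lmap X T) exp :
  open_adj p exp -> s \o j =l lid X -> f \o s =l p -> open_adj f (fun x => exp (finv s x)).
Proof.
  intros Hp Hsj Hfs. lunfold. split; intros x y.
  - rewrite (proj1 Hp), <- Hfs. split; intros H.
    + rewrite <- (Hsj x), <- (Hsj (finv f y)). apply finv_mono, H.
    + apply finv_mono, H.
  - rewrite finv_meet, Hfs. apply (open_adj_frob Hp).
Qed.

(* f_! and f^* are then mutually inverse, so f_! is itself a frame homomorphism. *)
Lemma iso_of_open_adj (X Y : frame) (f : lmap X Y) ex :
  open_adj f ex -> ex (ftop X) = ftop Y -> (forall x, fle (finv f (ex x)) x) -> is_iso f.
Proof.
  intros Hex Htop Hcounit.
  assert (exK := open_adj_finvK Hex Htop).
  assert (finvK : forall x, finv f (ex x) = x).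
  { intros x. apply fle_antisym; [apply Hcounit | apply (open_adj_unit Hex)]. }
  assert (finv_inj : forall a b, finv f a = finv f b -> a = b).
  { intros a b H. rewrite <- (exK a), <- (exK b), H. reflexivity. }
  unshelve eexists (@LMap Y X ex _ _ _).
  - exact Htop.
  - intros a b. apply finv_inj. rewrite finvK, finv_meet, !finvK. reflexivity.
  - intros S. apply finv_inj. rewrite finvK, finv_join. apply join_ext.
    + intros x Sx. exists x. split; [| apply fle_refl].
      exists (ex x). split; [eauto | rewrite finvK; reflexivity].
    + intros x [s [[t [St ->]] ->]]. exists t. split; [exact St | apply Hcounit].
  - split; lunfold; intros; [apply finvK | apply exK].
Qed.

Lemma iso_surj (X Y : frame) (f : lmap X Y) : is_iso f -> is_surj f.
Proof.
  intros [e [_ He]] a b H. lunfold. rewrite <- (He a), <- (He b), H. reflexivity.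
Qed.

Lemma iso_open_adj_counit (X Y : frame) (f : lmap X Y) ex :
  is_iso f -> open_adj f ex -> forall y, fle (finv f (ex y)) y.
Proof.
  intros [e [He1 He2]] Hex y. rewrite <- (He1 y) at 2. lunfold.
  apply finv_mono, (proj1 Hex). rewrite He1. apply fle_refl.
Qed.

(** * Pullbacks along open maps *)

(* The frame of A x_C B is presented by generators x (x) y subject to the frame relations in
   each variable and (x /\ f^* c) (x) y = x (x) (g^* c /\ y).  An open is represented by the
   set of generators below it; [saturated] says exactly that such a set is an ideal for this
   presentation. *)
Section PullbackFrame.
Variables (A B C : frame) (f : lmap A C) (g : lmap B C).

Record saturated (D : A -> B -> Prop) : Prop := {
  sat_down : forall x y x' y', fle x' x -> fle y' y -> D x y -> D x' y';
  sat_joinl : forall (S : A -> Prop) y, (forall x, S x -> D x y) -> D (fjoin S) y;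
  sat_joinr : forall x (S : B -> Prop), (forall y, S y -> D x y) -> D x (fjoin S);
  sat_shift : forall x y c, D (fmeet x (finv f c)) y <-> D x (fmeet (finv g c) y) }.

Definition sat_rel := { D : A -> B -> Prop | saturated D }.

Lemma sat_rel_ext (D E : sat_rel) :
  (forall x y, proj1_sig D x y <-> proj1_sig E x y) -> D = E.
Proof.
  destruct D as [D HD], E as [E HE]; simpl; intros H.
  assert (D = E) as ->.
  { extensionality x; extensionality y; apply propositional_extensionality; auto. }
  f_equal; apply proof_irrelevance.
Qed.

Definition sat_closure (U : A -> B -> Prop) : A -> B -> Prop :=
  fun x y => forall D, saturated D -> (forall a b, U a b -> D a b) -> D x y.

Lemma saturated_closure U : saturated (sat_closure U).
Proof.
  split.
  - intros x y x' y' H1 H2 H D HD HU. apply (sat_down HD H1 H2), H; auto.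
  - intros S y H D HD HU. apply (sat_joinl HD). intros x Sx; apply H; auto.
  - intros x S H D HD HU. apply (sat_joinr HD). intros y Sy; apply H; auto.
  - intros x y c; split; intros H D HD HU; apply (sat_shift HD); apply H; auto.
Qed.

Lemma sat_closure_incl (U : A -> B -> Prop) x y : U x y -> sat_closure U x y.
Proof. intros H D HD HU; auto. Qed.

Lemma sat_closure_min (U D : A -> B -> Prop) : saturated D -> (forall a b, U a b -> D a b) ->
  forall x y, sat_closure U x y -> D x y.
Proof. intros HD HU x y H; apply H; auto. Qed.

Lemma saturated_and (D E : A -> B -> Prop) :
  saturated D -> saturated E -> saturated (fun x y => D x y /\ E x y).
Proof.
  intros HD HE; split.
  - intros x y x' y' H1 H2 [H3 H4]; split; eapply sat_down; eauto.
  - intros S y H; split; apply sat_joinl; auto; intros x Sx; apply H; auto.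
  - intros x S H; split; apply sat_joinr; auto; intros y Sy; apply H; auto.
  - intros x y c; rewrite (sat_shift HD), (sat_shift HE); tauto.
Qed.

Lemma saturated_full : saturated (fun _ _ => True).
Proof. split; auto; tauto. Qed.

(* The relation [below] is saturated, by distributivity of
   A and B, and contains [U]. *)
Lemma sat_closure_meet (D0 U : A -> B -> Prop) : saturated D0 ->
  (forall x y x' y', fle x' x -> fle y' y -> U x y -> U x' y') ->
  forall x y, D0 x y -> sat_closure U x y -> sat_closure (fun x y => D0 x y /\ U x y) x y.
Proof.
  intros HD0 HU x y D0xy Uxy.
  set (V := sat_closure (fun x y => D0 x y /\ U x y)).
  assert (HV : saturated V) by apply saturated_closure.
  set (below := fun x y => forall x' y', fle x' x -> fle y' y -> D0 x' y' -> V x' y').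
  assert (Hbelow : saturated below).
  { split.
    - intros a b a' b' H1 H2 H a'' b'' H3 H4 H5. apply H; auto; eapply fle_trans; eauto.
    - intros S b H x' y' H1 H2 H3. rewrite (fmeet_join_self H1).
      apply (sat_joinl HV). intros c [s [Ss ->]].
      apply (H s Ss); [apply fmeet_r | exact H2 |].
      eapply (sat_down HD0); [apply fmeet_l | apply fle_refl | exact H3].
    - intros a S H x' y' H1 H2 H3. rewrite (fmeet_join_self H2).
      apply (sat_joinr HV). intros c [s [Ss ->]].
      apply (H s Ss); [exact H1 | apply fmeet_r |].
      eapply (sat_down HD0); [apply fle_refl | apply fmeet_l | exact H3].
    - intros a b c; split; intros H x' y' H1 H2 H3.
      + rewrite <- (fmeet_idPr (fle_trans H2 (fmeet_l _ _))).
        apply (sat_shift HV). apply H.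
        * apply fmeet_mono; auto; apply fle_refl.
        * eapply fle_trans; [exact H2 | apply fmeet_r].
        * eapply (sat_down HD0); [apply fmeet_l | apply fle_refl | exact H3].
      + rewrite <- (fmeet_idPl (fle_trans H1 (fmeet_r _ _))).
        apply (sat_shift HV). apply H.
        * eapply fle_trans; [exact H1 | apply fmeet_l].
        * apply fmeet_mono; auto; apply fle_refl.
        * eapply (sat_down HD0); [apply fle_refl | apply fmeet_r | exact H3]. }
  assert (Ubelow : forall a b, U a b -> below a b).
  { intros a b Uab x' y' H1 H2 H3. apply sat_closure_incl. split; eauto. }
  apply (sat_closure_min Hbelow Ubelow Uxy); auto; apply fle_refl.
Qed.

Definition sat_le (D E : sat_rel) := forall x y, proj1_sig D x y -> proj1_sig E x y.

Definition sat_meet (D E : sat_rel) : sat_rel :=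
  exist _ (fun x y => proj1_sig D x y /\ proj1_sig E x y)
    (saturated_and (proj2_sig D) (proj2_sig E)).

Definition sat_join_rel (S : sat_rel -> Prop) (x : A) (y : B) : Prop :=
  exists D, S D /\ proj1_sig D x y.

Definition sat_join (S : sat_rel -> Prop) : sat_rel :=
  exist _ (sat_closure (sat_join_rel S)) (saturated_closure _).

Lemma sat_le_refl D : sat_le D D.
Proof. intros x y; auto. Qed.

Lemma sat_le_trans D E F : sat_le D E -> sat_le E F -> sat_le D F.
Proof. intros H1 H2 x y H; auto. Qed.

Lemma sat_le_antisym D E : sat_le D E -> sat_le E D -> D = E.
Proof. intros H1 H2; apply sat_rel_ext; split; auto. Qed.

Lemma sat_meet_glb D E F : sat_le F (sat_meet D E) <-> sat_le F D /\ sat_le F E.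
Proof.
  unfold sat_le; simpl; split; [intros H; split; intros; apply H; auto |].
  intros [H1 H2] x y H; auto.
Qed.

Lemma sat_join_lub (S : sat_rel -> Prop) E :
  sat_le (sat_join S) E <-> (forall D, S D -> sat_le D E).
Proof.
  unfold sat_le; simpl; split.
  - intros H D SD x y Dxy. apply H, sat_closure_incl. exists D; auto.
  - intros H x y. apply (sat_closure_min (proj2_sig E)).
    intros a b [D [SD Dab]]. eapply H; eauto.
Qed.

Lemma sat_distrib D (S : sat_rel -> Prop) :
  sat_meet D (sat_join S) = sat_join (fun E => exists s, S s /\ E = sat_meet D s).
Proof.
  apply sat_rel_ext; intros x y; simpl; split.
  - intros [Dxy Sxy].
    assert (Hdown : forall x y x' y', fle x' x -> fle y' y ->
              sat_join_rel S x y -> sat_join_rel S x' y').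
    { intros a b a' b' H1 H2 [E [SE Eab]]. exists E; split; auto.
      eapply (sat_down (proj2_sig E)); eauto. }
    generalize (sat_closure_meet (proj2_sig D) Hdown Dxy Sxy).
    apply sat_closure_min; [apply saturated_closure |].
    intros a b [Dab [E [SE Eab]]]. apply sat_closure_incl.
    exists (sat_meet D E). split; [eauto | simpl; auto].
  - apply (sat_closure_min (saturated_and (proj2_sig D) (saturated_closure _))).
    intros a b [E [[s [Ss ->]] [Dab sab]]]. split; auto.
    apply sat_closure_incl. exists s; auto.
Qed.

Definition pullback : frame :=
  {| carrier := sat_rel; fle := sat_le; fmeet := sat_meet; fjoin := sat_join;
     fle_refl := sat_le_refl; fle_trans := sat_le_trans; fle_antisym := sat_le_antisym;
     fmeet_glb := sat_meet_glb; fjoin_lub := sat_join_lub; fdistrib := sat_distrib |}.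

End PullbackFrame.

Section PullbackOpen.
Variables (A B C : frame) (f : lmap A C) (g : lmap B C).
Variables (exf : A -> C) (exg : B -> C) (Hf : open_adj f exf) (Hg : open_adj g exg).

Notation P := (pullback f g).

Lemma pb_top x y : proj1_sig (ftop P) x y.
Proof. apply sat_closure_incl. exists (exist _ _ (saturated_full f g)). split; simpl; auto. Qed.

Lemma sat_shiftl (D : A -> B -> Prop) x y :
  saturated f g D -> D (fmeet x (finv f (exg y))) y -> D x y.
Proof.
  intros HD H. apply (sat_shift HD) in H.
  rewrite (fmeet_idPr (open_adj_unit Hg y)) in H. exact H.
Qed.

Lemma sat_shiftr (D : A -> B -> Prop) x y :
  saturated f g D -> D x (fmeet (finv g (exf x)) y) -> D x y.
Proof.
  intros HD H. apply (sat_shift HD) in H.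
  rewrite (fmeet_idPl (open_adj_unit Hf x)) in H. exact H.
Qed.

(* x (x) y <= a (x) 1 iff x /\ f^*(g_! y) <= a: this is where openness of g is used. *)
Lemma saturated_pr1 (a : A) : saturated f g (fun x y => fle (fmeet x (finv f (exg y))) a).
Proof.
  split.
  - intros x y x' y' H1 H2 H. eapply fle_trans; [| exact H].
    apply fmeet_mono; auto. apply finv_mono, (open_adj_mono Hg); auto.
  - intros S y H. rewrite fdistrib_r. apply fjoin_le. intros c [s [Ss ->]]; auto.
  - intros x S H. eapply fle_trans.
    { apply fmeet_mono; [apply fle_refl |]. apply finv_mono, (open_adj_join Hg). }
    rewrite finv_join, fdistrib. apply fjoin_le.
    intros c [d [[e [[s [Ss ->]] ->]] ->]]. auto.
  - intros x y c. rewrite (open_adj_frobl Hg), finv_meet, fmeetA. tauto.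
Qed.

Lemma saturated_pr2 (b : B) : saturated f g (fun x y => fle (fmeet (finv g (exf x)) y) b).
Proof.
  split.
  - intros x y x' y' H1 H2 H. eapply fle_trans; [| exact H].
    apply fmeet_mono; auto. apply finv_mono, (open_adj_mono Hf); auto.
  - intros S y H. eapply fle_trans.
    { apply fmeet_mono; [| apply fle_refl]. apply finv_mono, (open_adj_join Hf). }
    rewrite finv_join, fdistrib_r. apply fjoin_le.
    intros c [d [[e [[s [Ss ->]] ->]] ->]]. auto.
  - intros x S H. rewrite fdistrib. apply fjoin_le. intros c [s [Ss ->]]; auto.
  - intros x y c. rewrite (open_adj_frob Hf), finv_meet, fmeetA. tauto.
Qed.

Definition pr1_inv (a : A) : P := exist _ _ (saturated_pr1 a).
Definition pr2_inv (b : B) : P := exist _ _ (saturated_pr2 b).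

Lemma pr1_inv_top : pr1_inv (ftop A) = ftop P.
Proof. apply sat_rel_ext; intros x y; simpl; split; intros; [apply pb_top | apply fle_top]. Qed.

Lemma pr2_inv_top : pr2_inv (ftop B) = ftop P.
Proof. apply sat_rel_ext; intros x y; simpl; split; intros; [apply pb_top | apply fle_top]. Qed.

Lemma pr1_inv_meet a b : pr1_inv (fmeet a b) = fmeet (pr1_inv a) (pr1_inv b).
Proof. apply sat_rel_ext; intros x y; simpl. apply fmeet_glb. Qed.

Lemma pr2_inv_meet a b : pr2_inv (fmeet a b) = fmeet (pr2_inv a) (pr2_inv b).
Proof. apply sat_rel_ext; intros x y; simpl. apply fmeet_glb. Qed.

Lemma pr1_inv_join (S : A -> Prop) :
  pr1_inv (fjoin S) = fjoin (fun D => exists s, S s /\ D = pr1_inv s).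
Proof.
  apply sat_rel_ext; intros x y; simpl; split.
  - intros H. apply (sat_shiftl (saturated_closure _ _ _)).
    rewrite (fmeet_join_self H). apply (sat_joinl (saturated_closure _ _ _)).
    intros c [s [Ss ->]]. apply sat_closure_incl.
    exists (pr1_inv s). split; [eauto | simpl; solve_meet].
  - apply (sat_closure_min (saturated_pr1 (fjoin S))).
    intros a b [D [[s [Ss ->]] Hd]]. simpl in Hd.
    eapply fle_trans; [exact Hd | apply join_ub; auto].
Qed.

Lemma pr2_inv_join (S : B -> Prop) :
  pr2_inv (fjoin S) = fjoin (fun D => exists s, S s /\ D = pr2_inv s).
Proof.
  apply sat_rel_ext; intros x y; simpl; split.
  - intros H. apply (sat_shiftr (saturated_closure _ _ _)).
    rewrite (fmeet_join_self H). apply (sat_joinr (saturated_closure _ _ _)).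
    intros c [s [Ss ->]]. apply sat_closure_incl.
    exists (pr2_inv s). split; [eauto | simpl; solve_meet].
  - apply (sat_closure_min (saturated_pr2 (fjoin S))).
    intros a b [D [[s [Ss ->]] Hd]]. simpl in Hd.
    eapply fle_trans; [exact Hd | apply join_ub; auto].
Qed.

Definition pb_pr1 : lmap P A := LMap pr1_inv_top pr1_inv_meet pr1_inv_join.
Definition pb_pr2 : lmap P B := LMap pr2_inv_top pr2_inv_meet pr2_inv_join.

Lemma pb_square : f \o pb_pr1 =l g \o pb_pr2.
Proof.
  intros c. apply sat_rel_ext; intros x y; simpl.
  rewrite <- (proj1 Hf), <- (proj1 Hg), (open_adj_frob Hf), (open_adj_frobl Hg). tauto.
Qed.

Lemma pb_box_le (D : P) x y :
  proj1_sig D x y -> fle (fmeet (finv pb_pr1 x) (finv pb_pr2 y)) D.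
Proof.
  intros Dxy x' y' [H1 H2]; simpl in H1, H2.
  apply (sat_shiftr (proj2_sig D)).
  assert (Hd : proj1_sig D (fmeet x' (finv f (exg y'))) (fmeet (finv g (exf x')) y')).
  { exact (sat_down (proj2_sig D) H1 H2 Dxy). }
  apply (proj1 (sat_shift (proj2_sig D) _ _ _)) in Hd.
  rewrite (fmeet_idPr (fle_trans (fmeet_r _ _) (open_adj_unit Hg y'))) in Hd.
  exact Hd.
Qed.

Lemma pb_decomp (D : P) :
  D = fjoin (fun E => exists x y, proj1_sig D x y /\
                                  E = fmeet (finv pb_pr1 x) (finv pb_pr2 y)).
Proof.
  apply fle_antisym.
  - intros x y H. apply sat_closure_incl.
    exists (fmeet (finv pb_pr1 x) (finv pb_pr2 y)). split; [eauto | simpl; split; solve_meet].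
  - apply fjoin_le. intros E [x [y [H ->]]]. apply pb_box_le, H.
Qed.

Lemma pb_uniq (W : frame) (h h' : lmap W P) :
  pb_pr1 \o h =l pb_pr1 \o h' -> pb_pr2 \o h =l pb_pr2 \o h' -> h =l h'.
Proof.
  assert (Hle : forall k k' : lmap W P, pb_pr1 \o k =l pb_pr1 \o k' ->
            pb_pr2 \o k =l pb_pr2 \o k' -> forall D, fle (finv k D) (finv k' D)).
  { intros k k' H1 H2 D. rewrite (pb_decomp D) at 1. rewrite finv_join. apply fjoin_le.
    intros w [E [[x [y [Dxy ->]]] ->]]. lunfold.
    rewrite finv_meet, H1, H2, <- finv_meet. apply finv_mono, pb_box_le, Dxy. }
  intros H1 H2 D. apply fle_antisym; apply Hle; auto; intros z; symmetry; auto.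
Qed.

Section Pairing.
Variables (W : frame) (a : lmap W A) (b : lmap W B) (Hab : f \o a =l g \o b).

Lemma pair_square c : finv a (finv f c) = finv b (finv g c).
Proof. exact (Hab c). Qed.

Definition pair_inv (D : P) : W :=
  fjoin (fun w => exists x y, proj1_sig D x y /\ w = fmeet (finv a x) (finv b y)).

Lemma saturated_pair_le w : saturated f g (fun x y => fle (fmeet (finv a x) (finv b y)) w).
Proof.
  split.
  - intros x y x' y' H1 H2 H. eapply fle_trans; [| exact H].
    apply fmeet_mono; apply finv_mono; auto.
  - intros S y H. rewrite finv_join, fdistrib_r. apply fjoin_le.
    intros v [t [[s [Ss ->]] ->]]. auto.
  - intros x S H. rewrite finv_join, fdistrib. apply fjoin_le.
    intros v [t [[s [Ss ->]] ->]]. auto.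
  - intros x y c. rewrite !finv_meet, pair_square, fmeetA. tauto.
Qed.

Lemma pair_inv_mono (D E : P) : fle D E -> fle (pair_inv D) (pair_inv E).
Proof.
  intros H. apply fjoin_le. intros w [x [y [Dxy ->]]]. apply join_ub. exists x, y; auto.
Qed.

Lemma pair_inv_top : pair_inv (ftop P) = ftop W.
Proof.
  apply fle_antisym; [apply fle_top |].
  eapply fle_trans;
    [| apply join_ub; exists (ftop A), (ftop B); split; [apply pb_top | reflexivity]].
  rewrite !finv_top, fmeet_topl. apply fle_refl.
Qed.

Lemma pair_inv_meet D E : pair_inv (fmeet D E) = fmeet (pair_inv D) (pair_inv E).
Proof.
  apply fle_antisym.
  - apply fjoin_le. intros w [x [y [[Dxy Exy] ->]]].
    apply fmeet_intro; apply join_ub; exists x, y; split; auto.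
  - unfold pair_inv at 1 2. rewrite fdistrib. apply fjoin_le.
    intros w [t [[x' [y' [Ex' ->]]] ->]].
    rewrite fdistrib_r. apply fjoin_le. intros w [t [[x [y [Dx ->]]] ->]].
    eapply fle_trans;
      [| apply join_ub; exists (fmeet x x'), (fmeet y y'); split; [split | reflexivity]].
    + rewrite !finv_meet. solve_meet.
    + exact (sat_down (proj2_sig D) (fmeet_l _ _) (fmeet_l _ _) Dx).
    + exact (sat_down (proj2_sig E) (fmeet_r _ _) (fmeet_r _ _) Ex').
Qed.

Lemma pair_inv_join (S : P -> Prop) :
  pair_inv (fjoin S) = fjoin (fun w => exists D, S D /\ w = pair_inv D).
Proof.
  apply fle_antisym.
  - apply fjoin_le. intros w [x [y [Hc ->]]]. revert x y Hc.
    apply (sat_closure_min (saturated_pair_le _)).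
    intros x y [D [SD Dxy]].
    eapply fle_trans; [| apply join_ub; exists D; split; [exact SD | reflexivity]].
    apply join_ub. exists x, y; auto.
  - apply fjoin_le. intros w [D [SD ->]]. apply pair_inv_mono.
    intros x y H. apply sat_closure_incl. exists D; auto.
Qed.

Definition pb_pair : lmap W P := LMap pair_inv_top pair_inv_meet pair_inv_join.

Lemma pb_pr1_pair : pb_pr1 \o pb_pair =l a.
Proof.
  intros x0. change (pair_inv (pr1_inv x0) = finv a x0). apply fle_antisym.
  - apply fjoin_le. intros w [x [y [H ->]]]. simpl in H.
    eapply fle_trans; [| apply finv_mono; exact H]. rewrite finv_meet.
    apply fmeet_intro; [solve_meet |]. eapply fle_trans; [apply fmeet_r |].
    rewrite pair_square. apply finv_mono, (open_adj_unit Hg).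
  - eapply fle_trans;
      [| apply join_ub; exists x0, (ftop B); split; [simpl; apply fmeet_l | reflexivity]].
    rewrite finv_top, fmeet_topr. apply fle_refl.
Qed.

Lemma pb_pr2_pair : pb_pr2 \o pb_pair =l b.
Proof.
  intros y0. change (pair_inv (pr2_inv y0) = finv b y0). apply fle_antisym.
  - apply fjoin_le. intros w [x [y [H ->]]]. simpl in H.
    eapply fle_trans; [| apply finv_mono; exact H]. rewrite finv_meet.
    apply fmeet_intro; [| solve_meet]. eapply fle_trans; [apply fmeet_l |].
    rewrite <- pair_square. apply finv_mono, (open_adj_unit Hf).
  - eapply fle_trans;
      [| apply join_ub; exists (ftop A), y0; split; [simpl; apply fmeet_r | reflexivity]].
    rewrite finv_top, fmeet_topl. apply fle_refl.
Qed.

End Pairing.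

Lemma pullback_is_pullback : is_pullback f g pb_pr1 pb_pr2.
Proof.
  split; [apply pb_square | split; [| apply pb_uniq]].
  intros W a b H. exists (pb_pair H). split; [apply pb_pr1_pair | apply pb_pr2_pair].
Qed.

Definition pb_pr1_ex (D : P) : A :=
  fjoin (fun w => exists x y, proj1_sig D x y /\ w = fmeet x (finv f (exg y))).

Lemma pb_pr1_open : open_adj pb_pr1 pb_pr1_ex.
Proof.
  split; intros D a0.
  - split.
    + intros H x y Dxy. simpl. eapply fle_trans; [| exact H]. apply join_ub; eauto.
    + intros H. apply fjoin_le. intros w [x [y [Dxy ->]]]. apply (H x y Dxy).
  - apply fle_antisym.
    + apply fjoin_le. intros w [x [y [[Dxy Hxy] ->]]]. apply fmeet_intro; [| exact Hxy].
      apply join_ub; eauto.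
    + unfold pb_pr1_ex at 1. rewrite fdistrib_r. apply fjoin_le.
      intros w [t [[x [y [Dxy ->]]] ->]].
      eapply fle_trans; [| apply join_ub; exists (fmeet x a0), y; split; [split | reflexivity]].
      * solve_meet.
      * exact (sat_down (proj2_sig D) (fmeet_l _ _) (fle_refl _) Dxy).
      * simpl. solve_meet.
Qed.

Lemma pb_beck_chevalley y : pb_pr1_ex (finv pb_pr2 y) = finv f (exg y).
Proof.
  apply fle_antisym.
  - apply fjoin_le. intros w [x [y' [H ->]]]. simpl in H.
    eapply fle_trans; [apply fmeet_mono; [apply (open_adj_unit Hf) | apply fle_refl] |].
    rewrite <- finv_meet, <- (open_adj_frobl Hg).
    apply finv_mono, (open_adj_mono Hg), H.
  - eapply fle_trans;
      [| apply join_ub; exists (ftop A), y; split; [simpl; apply fmeet_r | reflexivity]].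
    rewrite fmeet_topl. apply fle_refl.
Qed.

End PullbackOpen.

Lemma pb_pr1_ex_pullback_le (Y X C Z M : frame) (g : lmap Y C) (c : lmap X C)
  (a : lmap Z M) (b : lmap X M) exg exc exa exb (Hg : open_adj g exg)
  (Hc : open_adj c exc) (Ha : open_adj a exa) (Hb : open_adj b exb)
  (f : lmap Z Y) (phi : lmap (pullback a b) (pullback g c)) :
  pb_pr1 g Hc \o phi =l f \o pb_pr1 a Hb -> pb_pr2 c Hg \o phi =l pb_pr2 b Ha ->
  (forall x, fle (finv f (finv g (exc x))) (finv a (exb x))) ->
  forall E, fle (finv f (pb_pr1_ex exc E)) (pb_pr1_ex exb (finv phi E)).
Proof.
  intros Hphi1 Hphi2 Hfc E.
  unfold pb_pr1_ex at 1. rewrite finv_join. apply fjoin_le.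
  intros w [t [[y [x [Exy ->]]] ->]]. rewrite finv_meet.
  eapply fle_trans; [apply fmeet_mono; [apply fle_refl | apply Hfc] |].
  rewrite <- (pb_beck_chevalley Ha Hb), <- (open_adj_frobl (pb_pr1_open a Hb)).
  apply (open_adj_mono (pb_pr1_open a Hb)).
  change (fle (fmeet (finv (f \o pb_pr1 a Hb) y) (finv (pb_pr2 b Ha) x)) (finv phi E)).
  rewrite <- Hphi1, <- Hphi2. cbn [finv lcomp]. rewrite <- finv_meet.
  apply finv_mono, pb_box_le, Exy.
Qed.

(** * Open surjections and principal bundles *)

Lemma open_surj_descent (X M : frame) (pi : lmap X M) ex (Hex : open_adj pi ex) u :
  finv (pb_pr1 pi Hex) u = finv (pb_pr2 pi Hex) u -> finv pi (ex u) = u.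
Proof.
  intros H. apply fle_antisym; [| apply (open_adj_unit Hex)].
  (* (pi^* pi_! u) (x) u lies below pr2^* u = pr1^* u, i.e. below u (x) 1. *)
  assert (Hu : proj1_sig (finv (pb_pr2 pi Hex) u) (finv pi (ex u)) u) by apply fmeet_r.
  rewrite <- H in Hu. simpl in Hu.
  eapply fle_trans; [| exact Hu]. solve_meet.
Qed.

(* d^* := pi_! o c^*, a frame map because pi^* o pi_! fixes every c^* z. *)
Lemma open_surj_coequalizer (X M Z : frame) (pi : lmap X M) ex (Hex : open_adj pi ex)
  (c : lmap X Z) : is_surj pi ->
  c \o pb_pr1 pi Hex =l c \o pb_pr2 pi Hex -> exists d : lmap M Z, d \o pi =l c.
Proof.
  intros Hs Hc.
  assert (Hd : forall z, finv pi (ex (finv c z)) = finv c z).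
  { intros z. exact (open_surj_descent (Hc z)). }
  unshelve eexists (@LMap M Z (fun z => ex (finv c z)) _ _ _).
  - apply Hs. rewrite Hd, !finv_top. reflexivity.
  - intros a b. apply Hs. rewrite Hd, !finv_meet, !Hd. reflexivity.
  - intros S. apply Hs. rewrite Hd, finv_join, finv_join. apply join_ext.
    + intros x [s [Ss ->]]. exists (finv c s). split; [| apply fle_refl].
      exists (ex (finv c s)). split; eauto.
    + intros x [t [[s [Ss ->]] ->]]. exists (finv c s). split; [eauto |].
      rewrite Hd; apply fle_refl.
  - intros z. apply Hd.
Qed.

Section PrincipalBundle.
Variables (G : groupoid) (X : glocale G) (M : frame) (pi : lmap (gX X) M).
Hypothesis Hpi : principal pi.

Lemma principal_transitive (W : frame) (y x : lmap W (gX X)) :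
  pi \o y =l pi \o x -> exists s : lmap W (gP X), gact X \o s =l y /\ gq2 X \o s =l x.
Proof.
  intros Hyx. destruct Hpi as [_ [Hiso [[ex Hex] _]]].
  destruct (Hiso _ _ _ (pullback_is_pullback Hex Hex)) as [h [Hh1 [Hh2 [e [_ He]]]]].
  exists (e \o pb_pair Hyx).
  split; lunfold; intros z; [rewrite <- Hh1 | rewrite <- Hh2]; rewrite He;
    [exact (pb_pr1_pair Hex Hyx z) | exact (pb_pr2_pair Hex Hyx z)].
Qed.

Lemma principal_free (W : frame) (s t : lmap W (gP X)) :
  gact X \o s =l gact X \o t -> gq2 X \o s =l gq2 X \o t -> s =l t.
Proof.
  intros Hact Hq2. destruct Hpi as [_ [Hiso [[ex Hex] _]]].
  destruct (Hiso _ _ _ (pullback_is_pullback Hex Hex)) as [h [Hh1 [Hh2 [e [He _]]]]].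
  assert (Hst : h \o s =l h \o t).
  { apply (pb_uniq (Hf := Hex) (Hg := Hex)); lunfold; intros z; rewrite Hh1 || rewrite Hh2; auto. }
  lunfold. intros z. rewrite <- (He z). apply Hst.
Qed.

End PrincipalBundle.

Section Equivariant.
Variables (G : groupoid) (X1 X2 : glocale G) (f : lmap (gX X1) (gX X2)).
Hypothesis Hf : equivariant f.

Lemma equivariant_act (W : frame) (s : lmap W (gP X1)) :
  exists s' : lmap W (gP X2),
    gq1 X2 \o s' =l gq1 X1 \o s /\ gq2 X2 \o s' =l f \o gq2 X1 \o s /\
    f \o gact X1 \o s =l gact X2 \o s'.
Proof.
  destruct Hf as [Hanch Hact]. destruct (gP_pb X1) as [Hsq _]. destruct (gP_pb X2) as [_ [Hpair _]].
  assert (Hs : gd G \o (gq1 X1 \o s) =l ganch X2 \o (f \o gq2 X1 \o s)).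
  { lunfold. intros z. rewrite Hanch, Hsq. reflexivity. }
  destruct (Hpair _ _ _ Hs) as [s' [H1 H2]].
  exists s'. split; [| split]; auto.
Qed.

Lemma equivariant_invariant (M2 : frame) (pi2 : lmap (gX X2) M2) :
  principal pi2 -> pi2 \o f \o gact X1 =l pi2 \o f \o gq2 X1.
Proof.
  intros [Hinv _]. destruct (equivariant_act (lid _)) as [s' [_ [Hq2 Hact]]].
  lunfold. intros m. rewrite Hact, Hinv. apply Hq2.
Qed.

Lemma equivariant_inverse (e : lmap (gX X2) (gX X1)) :
  e \o f =l lid _ -> f \o e =l lid _ -> equivariant e.
Proof.
  intros He1 He2. destruct Hf as [Hanch Hact]. split.
  - lunfold. intros y. rewrite <- Hanch. apply He2.
  - intros W s s' H1 H2.
    assert (Hs : f \o gact X1 \o s' =l gact X2 \o s).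
    { apply Hact; lunfold; intros y; [symmetry; apply H1 | rewrite H2, He2; reflexivity]. }
    lunfold. intros y. rewrite <- Hs, He1. reflexivity.
Qed.

End Equivariant.

Lemma equivariant_descends (G : groupoid) (X1 X2 : glocale G) (M1 M2 : frame)
  (pi1 : lmap (gX X1) M1) (pi2 : lmap (gX X2) M2) (f : lmap (gX X1) (gX X2)) :
  principal pi1 -> principal pi2 -> equivariant f ->
  exists fG : lmap M1 M2, fG \o pi1 =l pi2 \o f.
Proof.
  intros P1 P2 Hf. pose proof P1 as [_ [_ [[ex Hex] Hsurj]]].
  apply (open_surj_coequalizer (Hex := Hex) Hsurj).
  destruct (principal_transitive P1 (pb_square Hex Hex)) as [s [Hs1 Hs2]].
  assert (Hinv := equivariant_invariant Hf P2).
  lunfold. intros m. rewrite <- Hs1, <- Hs2, Hinv. reflexivity.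
Qed.

Lemma iso_descends (G : groupoid) (X1 X2 : glocale G) (M1 M2 : frame)
  (pi1 : lmap (gX X1) M1) (pi2 : lmap (gX X2) M2) (f : lmap (gX X1) (gX X2)) (fG : lmap M1 M2) :
  principal pi1 -> principal pi2 -> equivariant f -> fG \o pi1 =l pi2 \o f ->
  is_iso f -> is_iso fG.
Proof.
  intros P1 P2 Hf HfG [e [He1 He2]].
  destruct (equivariant_descends P2 P1 (equivariant_inverse Hf He1 He2)) as [eG HeG].
  pose proof P1 as [_ [_ [_ Hs1]]]. pose proof P2 as [_ [_ [_ Hs2]]].
  exists eG. split; [apply (surj_cancel Hs1) | apply (surj_cancel Hs2)];
    lunfold; intros m; [rewrite HfG, HeG, He1 | rewrite HeG, HfG, He2]; reflexivity.
Qed.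

Lemma open_descends (X1 X2 M1 M2 : frame) (pi1 : lmap X1 M1) (pi2 : lmap X2 M2)
  (f : lmap X1 X2) (fG : lmap M1 M2) :
  is_surj pi1 -> is_open pi2 -> fG \o pi1 =l pi2 \o f -> is_open f -> is_open fG.
Proof.
  intros Hs1 [ex2 Hex2] HfG [exf Hexf].
  assert (Hex := open_adj_comp Hexf Hex2). lunfold.
  exists (fun m => ex2 (exf (finv pi1 m))). split; intros m n.
  - rewrite (proj1 Hex). cbn [finv lcomp]. rewrite <- HfG. split.
    + apply surj_fle, Hs1.
    + apply finv_mono.
  - rewrite finv_meet, HfG. apply (open_adj_frob Hex).
Qed.

(** * Lifting along a morphism of principal bundles *)

Section Lift.
Variables (G : groupoid) (X1 X2 : glocale G) (M1 M2 : frame).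
Variables (pi1 : lmap (gX X1) M1) (pi2 : lmap (gX X2) M2).
Hypotheses (P1 : principal pi1) (P2 : principal pi2).
Variables (f : lmap (gX X1) (gX X2)) (fG : lmap M1 M2).
Hypotheses (Hf : equivariant f) (HfG : fG \o pi1 =l pi2 \o f).
Variables (exa : gX X1 -> M1) (exb : gX X2 -> M2) (exG : M1 -> M2).
Hypotheses (Hexa : open_adj pi1 exa) (Hexb : open_adj pi2 exb) (HexG : open_adj fG exG).

Notation Hexc := (open_adj_comp Hexa HexG).
Notation T := (pullback pi2 (fG \o pi1)).
Notation prY := (pb_pr1 pi2 Hexc).
Notation prX := (pb_pr2 (fG \o pi1) Hexb).
Notation k1 := (pb_pr1 pi1 Hexa).
Notation k2 := (pb_pr2 pi1 Hexa).

Lemma graph_square : pi2 \o f =l (fG \o pi1) \o lid (gX X1).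
Proof. intros m. symmetry. apply HfG. Qed.

Definition graph : lmap (gX X1) T := pb_pair graph_square.

Lemma graph_kernel_square : pi2 \o (f \o k1) =l (fG \o pi1) \o k2.
Proof.
  assert (Hsq := pb_square Hexa Hexa). lunfold. intros m. rewrite <- HfG, Hsq. reflexivity.
Qed.

Definition graph_kernel : lmap (pullback pi1 pi1) T := pb_pair graph_kernel_square.

(* For (y, x) in T, t (y, x) = (g, f x) and sigma (y, x) = (g, x), where g . f x = y. *)
Section Translation.
Variables (t : lmap T (gP X2)) (sigma : lmap T (gP X1)).
Hypotheses (Ht1 : gact X2 \o t =l prY) (Ht2 : gq2 X2 \o t =l f \o prX).
Hypotheses (Hs1 : gq1 X1 \o sigma =l gq1 X2 \o t) (Hs2 : gq2 X1 \o sigma =l prX).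

Lemma translation_lifts : f \o (gact X1 \o sigma) =l prY.
Proof.
  destruct Hf as [_ Hact].
  assert (H : f \o gact X1 \o sigma =l gact X2 \o t).
  { apply Hact; lunfold; intros y; [symmetry; apply Hs1 | rewrite Ht2, Hs2; reflexivity]. }
  lunfold. intros y. rewrite H. apply Ht1.
Qed.

Lemma translation_graph : gact X1 \o sigma \o graph =l lid _.
Proof.
  destruct Hf as [Hanch _]. destruct (gP_pb X2) as [_ [Hpair _]].
  assert (Hu : gd G \o (gu G \o ganch X2 \o f) =l ganch X2 \o f).
  { assert (H := @gd_u G). lunfold. intros y. rewrite H. reflexivity. }
  destruct (Hpair _ _ _ Hu) as [s0 [Hs01 Hs02]].
  assert (Hact0 : gact X2 \o s0 =l f) by (apply gact_unit; auto).
  assert (Ht0 : t \o graph =l s0).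
  { apply (principal_free P2); lunfold; intros y.
    - rewrite Ht1, Hact0. apply (pb_pr1_pair Hexc graph_square).
    - rewrite Ht2, Hs02. f_equal. apply (pb_pr2_pair Hexb graph_square). }
  change (gact X1 \o (sigma \o graph) =l lid _).
  apply gact_unit; lunfold; intros y.
  - rewrite Hs1, Ht0, Hs01, Hanch. reflexivity.
  - rewrite Hs2. apply (pb_pr2_pair Hexb graph_square).
Qed.

Lemma translation_kernel : gact X1 \o sigma \o graph_kernel =l k1.
Proof.
  destruct (principal_transitive P1 (pb_square Hexa Hexa)) as [r [Hr1 Hr2]].
  destruct (equivariant_act Hf r) as [r' [Hr'1 [Hr'2 Hr'3]]].
  assert (Ht' : t \o graph_kernel =l r').
  { apply (principal_free P2); lunfold; intros y.
    - rewrite Ht1, <- Hr'3, Hr1. apply (pb_pr1_pair Hexc graph_kernel_square).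
    - rewrite Ht2, Hr'2, Hr2. apply (pb_pr2_pair Hexb graph_kernel_square). }
  assert (Hsr : sigma \o graph_kernel =l r).
  { destruct (gP_pb X1) as [_ [_ Huniq]]. apply Huniq; lunfold; intros y.
    - rewrite Hs1, Ht', Hr'1. reflexivity.
    - rewrite Hs2, Hr2. apply (pb_pr2_pair Hexb graph_kernel_square). }
  lunfold. intros y. rewrite Hsr. apply Hr1.
Qed.

End Translation.

Lemma translation_exists : exists s : lmap T (gX X1),
  f \o s =l prY /\ s \o graph =l lid _ /\ s \o graph_kernel =l k1.
Proof.
  assert (HT : pi2 \o prY =l pi2 \o (f \o prX)).
  { assert (Hsq := pb_square Hexb Hexc). lunfold. intros m. rewrite Hsq, HfG. reflexivity. }
  destruct (principal_transitive P2 HT) as [t [Ht1 Ht2]].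
  assert (Hsig : gd G \o (gq1 X2 \o t) =l ganch X1 \o prX).
  { destruct (gP_pb X2) as [Hsq _]. destruct Hf as [Hanch _].
    lunfold. intros y. rewrite Hsq, Ht2, Hanch. reflexivity. }
  destruct (gP_pb X1) as [_ [Hpair _]]. destruct (Hpair _ _ _ Hsig) as [sigma [Hs1 Hs2]].
  exists (gact X1 \o sigma). split; [| split].
  - exact (translation_lifts Ht1 Ht2 Hs1 Hs2).
  - exact (translation_graph Ht1 Ht2 Hs1 Hs2).
  - exact (translation_kernel Ht1 Ht2 Hs1 Hs2).
Qed.

Lemma lift_open : is_open f.
Proof.
  destruct translation_exists as [s [Hs [Hsec _]]].
  eexists. exact (open_adj_split (pb_pr1_open pi2 Hexc) Hsec Hs).
Qed.

Lemma lift_iso : is_iso fG -> is_iso f.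
Proof.
  intros Hiso. pose proof P1 as [_ [_ [_ Hsurj1]]].
  destruct translation_exists as [s [Hs [Hsec Hker]]].
  apply (iso_of_open_adj (open_adj_split (pb_pr1_open pi2 Hexc) Hsec Hs)).
  - rewrite finv_top, <- (finv_top prX), (pb_beck_chevalley Hexb Hexc).
    rewrite (open_adj_top Hexa Hsurj1), (open_adj_top HexG (iso_surj Hiso)). apply finv_top.
  - intros x. eapply fle_trans.
    + apply (pb_pr1_ex_pullback_le (Hg := Hexb) (Hc := Hexc) (Ha := Hexa) (Hb := Hexa)
                                   (phi := graph_kernel)).
      * apply pb_pr1_pair.
      * apply pb_pr2_pair.
      * intros m. assert (E := HfG (exG (exa m))). cbn [finv lcomp] in E.
        rewrite <- E. apply finv_mono, (iso_open_adj_counit Hiso HexG).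
    + change (finv graph_kernel (finv s x)) with (finv (s \o graph_kernel) x).
      rewrite (Hker x). apply (open_adj_counit (pb_pr1_open pi1 Hexa)).
Qed.

End Lift.

Unset Implicit Arguments.

Theorem lemma3p3 (G : groupoid) (HG : open_groupoid G)
  (X1 X2 : glocale G) (M1 M2 : frame)
  (pi1 : lmap (gX X1) M1) (pi2 : lmap (gX X2) M2)
  (P1 : principal pi1) (P2 : principal pi2)
  (f : lmap (gX X1) (gX X2)) (Hf : equivariant f) :
  (exists fG : lmap M1 M2,
      fG \o pi1 =l pi2 \o f /\
      (forall g : lmap M1 M2, g \o pi1 =l pi2 \o f -> g =l fG)) /\
  (forall fG : lmap M1 M2, fG \o pi1 =l pi2 \o f ->
      (is_iso f <-> is_iso fG) /\ (is_open f <-> is_open fG)).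
Proof.
  pose proof P1 as [_ [_ [[exa Hexa] Hsurj1]]].
  pose proof P2 as [_ [_ [[exb Hexb] _]]].
  split.
  - destruct (equivariant_descends P1 P2 Hf) as [fG HfG].
    exists fG. split; [exact HfG |].
    intros g Hg. apply (surj_cancel Hsurj1). intros m. rewrite (Hg m), (HfG m). reflexivity.
  - intros fG HfG. split; split.
    + exact (iso_descends P1 P2 Hf HfG).
    + intros Hiso. pose proof Hiso as [eG [HeG1 HeG2]].
      exact (lift_iso P1 P2 Hf HfG Hexa Hexb (open_adj_iso HeG1 HeG2) Hiso).
    + exact (open_descends Hsurj1 (ex_intro _ exb Hexb) HfG).
    + intros [exG HexG]. exact (lift_open P1 P2 Hf HfG Hexa Hexb HexG).
Qed.
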